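(* Let $(C,d_1+\cdots+d_k)$ be a finite-dimensional graded chain complex over a field, where $d_i$ raises the grading by $i$ (so the grading induces a filtration), and suppose its total homology is trivial. Suppose $C$ is concentrated in three adjacent gradings with graded pieces $C_1,C_2,C_3$ satisfying $\dim(C_2)=\dim(C_1)+\dim(C_3)$. Then $H_*(C,d_1)=0$. *)

From HB Require Import structures.
From mathcomp Require Import all_boot all_order all_algebra.
Set Implicit Arguments. Unset Strict Implicit. Unset Printing Implicit Defensive.
Import GRing.Theory Num.Theory.
Local Open Scope ring_scope.

(* A finite-dimensional graded vector space over F is modelled as 'rV[F]_N
   with a homogeneous basis: the standard basis vector e_a has degree gr a.
   Linear maps act on row vectors on the right (u |-> u *m M).
   [raises_by gr M i] : M maps degree-j elements to degree (j+i) elements. *)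
Definition raises_by (F : fieldType) (N : nat) (gr : 'I_N -> int)
    (M : 'M[F]_N) (i : nat) : Prop :=
  forall a b : 'I_N, M a b != 0 -> gr b = (gr a + i%:Z)%R.

Definition acyclic (F : fieldType) (N : nat) (M : 'M[F]_N) : Prop :=
  M *m M = 0 /\ (kermx M == M)%MS.

From HB Require Import structures.
From mathcomp Require Import all_boot all_order all_algebra zify.
Import GRing.Theory Num.Theory.
Local Open Scope ring_scope.

Set Implicit Arguments.
Unset Strict Implicit.

(* Write D = d_1 + E with E = d_2 + ... + d_k. Since the grading has width 2,
   every product d_i d_j with i + j > 2 vanishes, so D^2 = 0 forces d_1^2 = 0,
   and it remains to show that rank d_1 is at least half of dim C.  Acyclicity
   of D gives 2 rank D = dim C = 2 (dim C_1 + dim C_3).  Only d_1 reaches C_2,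
   and only d_1 leaves C_2, so splitting D by the degree of the target gives
   rank D <= rank (d_1 : C_1 -> C_2) + dim C_3, and splitting by the degree of
   the source gives rank D <= dim C_1 + rank (d_1 : C_2 -> C_3).  Adding up,
   2 rank D <= dim C_1 + dim C_3 + rank d_1 = rank D + rank d_1. *)

Lemma mxrank_sum_le (F : fieldType) m n (I : Type) (r : seq I) (P : pred I)
    (A : I -> 'M[F]_(m, n)) :
  (\rank (\sum_(i <- r | P i) A i)%R <= \sum_(i <- r | P i) \rank (A i))%N.
Proof.
elim/big_ind2: _ => [|B1 j1 B2 j2 le1 le2|//]; first by rewrite mxrank0.
exact: leq_trans (mxrank_add _ _) (leq_add le1 le2).
Qed.

Section Acyclic.
Variables (F : fieldType) (N : nat).
Implicit Type M : 'M[F]_N.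

Lemma mxrank_sqr0 M : M *m M = 0 -> (\rank M * 2 <= N)%N.
Proof.
move=> /sub_kermxP/mxrankS; rewrite mxrank_ker.
have := rank_leq_row M; lia.
Qed.

Lemma acyclicE M : acyclic M <-> M *m M = 0 /\ (\rank M * 2 = N)%N.
Proof.
have rk_ker := mxrank_ker M; have rkN := rank_leq_row M.
split=> [[MM0 kerM] | [MM0 rkM]].
  by split=> //; have := eqmx_rank kerM; lia.
split=> //; have sMk : (M <= kermx M)%MS by apply/sub_kermxP.
rewrite sMk andbT -(mxrank_leqif_sup sMk).2 rk_ker; apply/eqP; lia.
Qed.

End Acyclic.

Section GradeProjection.
Context {F : fieldType}.
Variables (N : nat) (gr : 'I_N -> int).
Implicit Types (M : 'M[F]_N) (h : int).

Definition grade_proj h : 'M[F]_N := diag_mx (\row_a (gr a == h)%:R).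
Local Notation P := grade_proj.

Lemma mul_grade_proj_mx h M a b : (P h *m M) a b = (gr a == h)%:R * M a b.
Proof. by rewrite mul_diag_mx !mxE. Qed.

Lemma mul_mx_grade_proj h M a b : (M *m P h) a b = M a b * (gr b == h)%:R.
Proof. by rewrite mul_mx_diag !mxE. Qed.

Lemma grade_proj_idem h : P h *m P h = P h.
Proof.
apply/matrixP => a b; rewrite mul_grade_proj_mx !mxE.
by case: (gr a == h); rewrite /= ?mulr1n ?mulr0n ?mul1r ?mul0r ?mul0rn.
Qed.

Lemma grade_proj_orth h h' : h != h' -> P h *m P h' = 0.
Proof.
move=> neq_hh'; apply/matrixP => a b; rewrite mul_grade_proj_mx !mxE.
have [->|_] := eqVneq (gr a) h; last by rewrite /= mulr0n mul0r.
by rewrite (negbTE neq_hh') /= mulr0n mul0rn mulr0.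
Qed.

Lemma capmx_grade_proj h h' : h != h' -> (P h :&: P h')%MS = 0.
Proof.
move=> neq_hh'; set X := (P h :&: P h')%MS.
have fixX h'' : (X <= P h'')%MS -> X *m P h'' = X.
  by move=> /submxP[Y ->]; rewrite -mulmxA grade_proj_idem.
by rewrite -(fixX h') ?capmxSr // -(fixX h) ?capmxSl // -mulmxA grade_proj_orth ?mulmx0.
Qed.

Lemma rank_grade_proj h : (\rank (P h) <= #|[set a | gr a == h]|)%N.
Proof.
rewrite -sum1dep_card big_mkcond /= /grade_proj diag_mx_sum_delta.
apply: leq_trans (mxrank_sum_le _ _ _) _; apply: leq_sum => a _; rewrite mxE.
by case: eqP; rewrite ?scale1r ?mxrank_delta ?scale0r ?mxrank0.
Qed.

Variable s : seq int.
Hypotheses (s_uniq : uniq s) (gr_s : forall a, gr a \in s).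

Lemma sum_grade_proj : \sum_(h <- s) P h = 1%:M.
Proof.
apply/matrixP => a b; rewrite summxE (bigD1_seq (gr a)) //= big1 => [|h].
  by rewrite !mxE eqxx addr0.
by rewrite !mxE eq_sym => /negbTE->; rewrite mul0rn.
Qed.

Lemma sum_card_grade : (\sum_(h <- s) #|[set a | gr a == h]|)%N = N.
Proof.
under eq_bigr do rewrite -sum1dep_card.
rewrite (exchange_big_dep predT) //= -[RHS]card_ord -sum1_card.
apply: eq_bigr => a _; rewrite sum1_count.
by rewrite (@eq_count _ _ (pred1 (gr a))) ?count_uniq_mem ?gr_s // => h; rewrite /= eq_sym.
Qed.

Lemma mxrank_le_sum_mulmx_grade_proj m (M : 'M[F]_(m, N)) :
  (\rank M <= \sum_(h <- s) \rank (M *m P h))%N.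
Proof.
rewrite -{1}[M]mulmx1 -sum_grade_proj mulmx_sumr; exact: mxrank_sum_le.
Qed.

Lemma mxrank_le_sum_grade_proj_mulmx n (M : 'M[F]_(N, n)) :
  (\rank M <= \sum_(h <- s) \rank (P h *m M))%N.
Proof.
rewrite -{1}[M]mul1mx -sum_grade_proj mulmx_suml; exact: mxrank_sum_le.
Qed.

End GradeProjection.

Section RaisingMaps.
Variables (F : fieldType) (N : nat) (gr : 'I_N -> int).
Implicit Types (M : 'M[F]_N) (h : int).
Local Notation P := (@grade_proj F N gr).

Lemma raises_by_grade_proj M i h : raises_by gr M i -> P h *m M = M *m P (h + i%:Z).
Proof.
move=> Mi; apply/matrixP => a b; rewrite mul_grade_proj_mx mul_mx_grade_proj.
have [->|/Mi->] := eqVneq (M a b) 0; first by rewrite mulr0 mul0r.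
by rewrite (inj_eq (addIr _)) mulrC.
Qed.

Lemma raises_byM (A B : 'M[F]_N) i j :
  raises_by gr A i -> raises_by gr B j -> raises_by gr (A *m B) (i + j).
Proof.
move=> Ai Bj a b; apply: contraNeq => gr_ab; rewrite mxE big1 // => c _.
have [->|/Ai gr_ac] := eqVneq (A a c) 0; first by rewrite mul0r.
have [->|/Bj gr_cb] := eqVneq (B c b) 0; first by rewrite mulr0.
by move: gr_ab; rewrite gr_cb gr_ac PoszD addrA eqxx.
Qed.

Lemma raises_by_eq0 lo hi M i :
  (forall a, lo <= gr a <= hi) -> hi < lo + i%:Z -> raises_by gr M i -> M = 0.
Proof.
move=> gr_bnd hi_lt Mi; apply/matrixP => a b; rewrite mxE.
have [//|/Mi gr_ab] := eqVneq (M a b) 0.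
by have := gr_bnd a; have := gr_bnd b; lia.
Qed.

Lemma raises_by_mulmx_grade_proj_eq0 lo M i h :
  (forall a, lo <= gr a) -> h < lo + i%:Z -> raises_by gr M i -> M *m P h = 0.
Proof.
move=> gr_ge h_lt Mi; apply/matrixP => a b; rewrite mul_mx_grade_proj mxE.
have [->|/Mi gr_ab] := eqVneq (M a b) 0; first by rewrite mul0r.
suff /negbTE-> : gr b != h by rewrite mulr0.
by have := gr_ge a; lia.
Qed.

Lemma raises_by_grade_proj_mulmx_eq0 hi M i h :
  (forall b, gr b <= hi) -> hi < h + i%:Z -> raises_by gr M i -> P h *m M = 0.
Proof.
move=> gr_le hi_lt Mi; apply/matrixP => a b; rewrite mul_grade_proj_mx mxE.
have [->|/Mi gr_ab] := eqVneq (M a b) 0; first by rewrite mulr0.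
suff /negbTE-> : gr a != h by rewrite mul0r.
by have := gr_le b; lia.
Qed.

Lemma raises_by_mxrank_grade_proj M i h h' : raises_by gr M i -> h != h' ->
  (\rank (M *m P h) + \rank (M *m P h') <= \rank M)%N.
Proof.
move=> Mi neq_hh'; rewrite -mxrank_disjoint_sum; last first.
  apply/eqP; rewrite -submx0 -(capmx_grade_proj gr neq_hh').
  exact: capmxS (submxMl _ _) (submxMl _ _).
(* [M P_h = P_(h - i) M] lies in the row space of [M]. *)
have sub_M h'' : (M *m P h'' <= M)%MS.
  by rewrite -(subrK i%:Z h'') -raises_by_grade_proj // submxMl.
by apply: mxrankS; rewrite addsmx_sub !sub_M.
Qed.

End RaisingMaps.

Section ThreeGraded.
Variables (F : fieldType) (N : nat) (gr : 'I_N -> int) (g : int).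
Hypothesis gr3 : forall a, gr a = g \/ gr a = g + 1 \/ gr a = g + 2.
Local Notation P := (@grade_proj F N gr).

Let gr_ge a : g <= gr a. Proof. by have := gr3 a; lia. Qed.
Let gr_le a : gr a <= g + 2. Proof. by have := gr3 a; lia. Qed.
Let grades_uniq : uniq [:: g; g + 1; g + 2]. Proof. by rewrite /= !inE; lia. Qed.
Let gr_grades a : gr a \in [:: g; g + 1; g + 2].
Proof. by rewrite !inE; have := gr3 a; lia. Qed.

Lemma card_grades3 :
  (#|[set a : 'I_N | gr a == g]| + #|[set a : 'I_N | (gr a == g + 1)%R]|
   + #|[set a : 'I_N | (gr a == g + 2)%R]|)%N = N.
Proof.
by have := sum_card_grade grades_uniq gr_grades; rewrite !big_cons big_nil addn0 addnA.
Qed.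

Variables (k : nat) (d : nat -> 'M[F]_N).
Hypothesis d_raises : forall i, (1 <= i <= k.+1)%N -> raises_by gr (d i) i.
Local Notation D := (\sum_(1 <= i < k.+2) d i).
Local Notation E := (\sum_(2 <= i < k.+2) d i).

Let D_leading : D = d 1%N + E. Proof. by rewrite big_ltn. Qed.

Lemma sqr_leading_eq0 : D *m D = 0 -> d 1%N *m d 1%N = 0.
Proof.
have prod0 i j : (1 <= i <= k.+1)%N -> (1 <= j <= k.+1)%N -> (2 < i + j)%N ->
    d i *m d j = 0.
  move=> i_rng j_rng ij_gt2; have dij := raises_byM (d_raises i_rng) (d_raises j_rng).
  by apply: (raises_by_eq0 (lo := g) (hi := g + 2)) dij => [a|]; rewrite ?gr_ge ?gr_le //; lia.
rewrite D_leading mulmxDl !mulmxDr.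
have -> : d 1%N *m E = 0.
  by rewrite mulmx_sumr big_nat big1 // => j /andP[? ?]; apply: prod0; lia.
have -> : E *m d 1%N = 0.
  by rewrite mulmx_suml big_nat big1 // => i /andP[? ?]; apply: prod0; lia.
have -> : E *m E = 0.
  rewrite mulmx_suml big_nat big1 // => i /andP[? ?].
  by rewrite mulmx_sumr big_nat big1 // => j /andP[? ?]; apply: prod0; lia.
by rewrite !addr0.
Qed.

Lemma higher_mulmx_grade_proj_eq0 h : h < g + 2 -> E *m P h = 0.
Proof.
move=> h_lt; rewrite mulmx_suml big_nat big1 // => i /andP[? ?].
by apply: (raises_by_mulmx_grade_proj_eq0 gr_ge _ (d_raises _)); lia.
Qed.

Lemma grade_proj_mulmx_higher_eq0 h : g < h -> P h *m E = 0.
Proof.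
move=> h_gt; rewrite mulmx_sumr big_nat big1 // => i /andP[? ?].
by apply: (raises_by_grade_proj_mulmx_eq0 gr_le _ (d_raises _)); lia.
Qed.

Lemma mxrank_leading_cols :
  (\rank D <= \rank (d 1%N *m P (g + 1)) + #|[set a : 'I_N | (gr a == g + 2)%R]|)%N.
Proof.
rewrite D_leading.
have DPg : (d 1%N + E) *m P g = 0.
  rewrite mulmxDl higher_mulmx_grade_proj_eq0 ?addr0; last by lia.
  by apply: (raises_by_mulmx_grade_proj_eq0 gr_ge _ (d_raises _)); lia.
have DPg1 : (d 1%N + E) *m P (g + 1) = d 1%N *m P (g + 1).
  by rewrite mulmxDl higher_mulmx_grade_proj_eq0 ?addr0 //; lia.
apply: leq_trans (mxrank_le_sum_mulmx_grade_proj grades_uniq gr_grades _) _.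
rewrite !big_cons big_nil addn0 DPg DPg1 mxrank0 add0n leq_add2l.
exact: leq_trans (mxrankM_maxr _ _) (rank_grade_proj _ _).
Qed.

Lemma mxrank_leading_rows :
  (\rank D <= #|[set a : 'I_N | gr a == g]| + \rank (d 1%N *m P (g + 2)))%N.
Proof.
rewrite D_leading.
have PD2 : P (g + 2) *m (d 1%N + E) = 0.
  rewrite mulmxDr grade_proj_mulmx_higher_eq0 ?addr0; last by lia.
  by apply: (raises_by_grade_proj_mulmx_eq0 gr_le _ (d_raises _)); lia.
have PD1 : P (g + 1) *m (d 1%N + E) = d 1%N *m P (g + 2).
  rewrite mulmxDr grade_proj_mulmx_higher_eq0 ?addr0; last by lia.
  by rewrite (raises_by_grade_proj _ (d_raises _)) // -addrA.
apply: leq_trans (mxrank_le_sum_grade_proj_mulmx grades_uniq gr_grades _) _.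
rewrite !big_cons big_nil PD1 PD2 mxrank0 !addn0 leq_add2r.
exact: leq_trans (mxrankM_maxl _ _) (rank_grade_proj _ _).
Qed.

End ThreeGraded.

Theorem lemma4p10 (F : fieldType) (N : nat) (gr : 'I_N -> int)
    (k : nat) (d : nat -> 'M[F]_N) :
  (forall i, (1 <= i <= k)%N -> raises_by gr (d i) i) ->
  acyclic (\sum_(1 <= i < k.+1) d i) ->
  (exists g : int,
     (forall a : 'I_N, gr a = g \/ gr a = g + 1 \/ gr a = g + 2) /\
     #|[set a : 'I_N | (gr a == g + 1)%R]| =
       (#|[set a : 'I_N | (gr a == g)%R]| + #|[set a : 'I_N | (gr a == g + 2)%R]|)%N) ->
  acyclic (d 1%N).
Proof.
move=> d_raises /acyclicE[DD0 rkD] [g [gr3 card_mid]].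
case: k => [|k] in d_raises DD0 rkD *.
  have N0 : N = 0%N by rewrite -rkD big_geq ?mxrank0.
  by subst N; rewrite (thinmx0 (d 1%N)); apply/acyclicE; rewrite mulmx0 mxrank0.
have d1_sqr0 := sqr_leading_eq0 gr3 d_raises DD0.
apply/acyclicE; split=> //.
have := mxrank_sqr0 d1_sqr0.
have neq_g12 : g + 1 != g + 2 by lia.
have := raises_by_mxrank_grade_proj (d_raises 1%N isT) neq_g12.
have := mxrank_leading_cols gr3 d_raises; have := mxrank_leading_rows gr3 d_raises.
have := card_grades3 gr3.
lia.
Qed.
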